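(* Let $\mathrm{VFS}$, $\mathrm{CPS}$, the negative translation ($V^{\sim}$, $M^{\wr}$, $M^{-}$) and the inverse translation ($P^{+}$, $M^{\times}$, $V^{\times\times}$) be as in the context. Then: (1) for all terms $M$ and values $V$ of $\mathrm{VFS}$, $(M^{-})^{+}=M$, $(M^{\wr})^{\times}=M$ and $(V^{\sim})^{\times\times}=V$; (2) for all terms $P$, commands $M$ and values $V$ of $\mathrm{CPS}$, $(P^{+})^{-}=P$, $(M^{\times})^{\wr}=M$ and $(V^{\times\times})^{\sim}=V$; (3) if $M_1\to M_2$ in $\mathrm{VFS}$ then $M_1^{\wr}\to M_2^{\wr}$ in $\mathrm{CPS}$ (hence $M_1^{-}\to M_2^{-}$ in $\mathrm{CPS}$); (4) if $M_1\to M_2$ for commands in $\mathrm{CPS}$ then $M_1^{\times}\to M_2^{\times}$ in $\mathrm{VFS}$; hence if $P_1\to P_2$ for terms in $\mathrm{CPS}$ then $P_1^{+}\to P_2^{+}$ in $\mathrm{VFS}$.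
   Context: Terms are considered up to $\alpha$-conversion; $[V/x]$ and $[K/k]$ denote capture-avoiding substitution; $\to$ denotes one-step reduction, i.e. the closure of the listed rules under all constructors. $\mathrm{VFS}$: terms $M,N::=\uparrow V\mid \mathsf{C}_v(V,c)$; values $V,W::=x\mid\lambda x.M$; formal contexts $c::= x.M\mid (W,x.M)$ ($x$ bound in $M$). Auxiliary operation: $\mathsf{C}_v(\uparrow V:c')=\mathsf{C}_v(V,c')$, $\mathsf{C}_v(\mathsf{C}_v(V,c):c')=\mathsf{C}_v(V,(c:c'))$, $((x.M):c')=x.\mathsf{C}_v(M:c')$, $((W,x.M):c')=(W,x.\mathsf{C}_v(M:c'))$. Rules: $(B_v)$ $\mathsf{C}_v(\lambda x.M,(V,y.N))\to \mathsf{C}_v(V,x.\mathsf{C}_v(M:y.N))$; $(\sigma_v)$ $\mathsf{C}_v(V,y.N)\to [V/y]N$. $\mathrm{CPS}$ (with a fixed distinguished covariable $k$): commands $M,N::= kV\mid KV\mid VWK$; continuations $K::=\lambda x.M$; values $V,W::=\lambda x.P\mid x$; terms $P::=\lambda k.M$. Rules: $(\sigma_v)$ $(\lambda x.M)V\to[V/x]M$; $(B_v)$ $(\lambda x.\lambda k.M)WK\to(\lambda x.[K/k]M)W$. Negative translation: $x^{\sim}=x$; $(\lambda x.M)^{\sim}=\lambda x.M^{-}$; $M^{-}=\lambda k.M^{\wr}$; $(\uparrow V)^{\wr}=kV^{\sim}$; $\mathsf{C}_v(V,x.M)^{\wr}=(\lambda x.M^{\wr})V^{\sim}$; $\mathsf{C}_v(V,(W,x.M))^{\wr}=V^{\sim}W^{\sim}(\lambda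 x.M^{\wr})$. Inverse translation: $(\lambda k.M)^{+}=M^{\times}$; $(kV)^{\times}=\uparrow(V^{\times\times})$; $((\lambda x.M)V)^{\times}=\mathsf{C}_v(V^{\times\times},x.M^{\times})$; $(VW(\lambda x.M))^{\times}=\mathsf{C}_v(V^{\times\times},(W^{\times\times},x.M^{\times}))$; $x^{\times\times}=x$; $(\lambda x.P)^{\times\times}=\lambda x.P^{+}$. *)

(* Syntax with binders is represented by de Bruijn indices,
   so terms are identified up to alpha-conversion and substitution is
   capture-avoiding by construction.  In CPS the unique covariable k is not
   indexed: an occurrence "k V" refers to the nearest enclosing lambda k. *)
From Stdlib Require Import Arith.

(* M ::= up V | Cv(V, c);  V ::= x | lambda x. M;  c ::= x.M | (W, x.M) *)
Inductive vterm : Type :=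
| VUp  : vval -> vterm
| VCv  : vval -> vctx -> vterm
with vval : Type :=
| VVar : nat -> vval
| VLam : vterm -> vval
with vctx : Type :=
| VAbs  : vterm -> vctx
| VPair : vval -> vterm -> vctx.    (* (W, x.M) : x binds index 0 in M *)

Fixpoint vlift_t (c : nat) (M : vterm) : vterm :=
  match M with
  | VUp V => VUp (vlift_v c V)
  | VCv V k => VCv (vlift_v c V) (vlift_c c k)
  end
with vlift_v (c : nat) (V : vval) : vval :=
  match V with
  | VVar n => VVar (if Nat.leb c n then S n else n)
  | VLam M => VLam (vlift_t (S c) M)
  end
with vlift_c (c : nat) (k : vctx) : vctx :=
  match k with
  | VAbs M => VAbs (vlift_t (S c) M)
  | VPair W M => VPair (vlift_v c W) (vlift_t (S c) M)
  end.

(* [s/j] : substitute s for index j, decrementing the indices above j *)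
Fixpoint vsubst_t (j : nat) (s : vval) (M : vterm) : vterm :=
  match M with
  | VUp V => VUp (vsubst_v j s V)
  | VCv V k => VCv (vsubst_v j s V) (vsubst_c j s k)
  end
with vsubst_v (j : nat) (s : vval) (V : vval) : vval :=
  match V with
  | VVar n => if Nat.eqb n j then s
              else if Nat.ltb j n then VVar (pred n) else VVar n
  | VLam M => VLam (vsubst_t (S j) (vlift_v 0 s) M)
  end
with vsubst_c (j : nat) (s : vval) (k : vctx) : vctx :=
  match k with
  | VAbs M => VAbs (vsubst_t (S j) (vlift_v 0 s) M)
  | VPair W M => VPair (vsubst_v j s W) (vsubst_t (S j) (vlift_v 0 s) M)
  end.

(* auxiliary operation  M : c'  (the paper's C_v(M : c')) and  c : c' ;
   c' lives in the same scope as M (resp. c) *)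
Fixpoint vappend_t (M : vterm) (c' : vctx) : vterm :=
  match M with
  | VUp V => VCv V c'
  | VCv V c => VCv V (vappend_c c c')
  end
with vappend_c (c : vctx) (c' : vctx) : vctx :=
  match c with
  | VAbs M => VAbs (vappend_t M (vlift_c 0 c'))
  | VPair W M => VPair W (vappend_t M (vlift_c 0 c'))
  end.

Inductive vstep_t : vterm -> vterm -> Prop :=
| vstep_Bv : forall M V N,
    vstep_t (VCv (VLam M) (VPair V N))
            (VCv V (VAbs (vappend_t M (vlift_c 0 (VAbs N)))))
| vstep_sigma : forall V N,
    vstep_t (VCv V (VAbs N)) (vsubst_t 0 V N)
| vstep_up : forall V V', vstep_v V V' -> vstep_t (VUp V) (VUp V')
| vstep_cv1 : forall V V' c, vstep_v V V' -> vstep_t (VCv V c) (VCv V' c)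
| vstep_cv2 : forall V c c', vstep_c c c' -> vstep_t (VCv V c) (VCv V c')
with vstep_v : vval -> vval -> Prop :=
| vstep_lam : forall M M', vstep_t M M' -> vstep_v (VLam M) (VLam M')
with vstep_c : vctx -> vctx -> Prop :=
| vstep_abs : forall M M', vstep_t M M' -> vstep_c (VAbs M) (VAbs M')
| vstep_pair1 : forall W W' M, vstep_v W W' -> vstep_c (VPair W M) (VPair W' M)
| vstep_pair2 : forall W M M', vstep_t M M' -> vstep_c (VPair W M) (VPair W M').

(* commands M ::= k V | K V | V W K;  K ::= lambda x. M;
   values V ::= lambda x. P | x;  terms P ::= lambda k. M *)
Inductive ccmd : Type :=
| CKV   : cval -> ccmd
| CApp  : ccont -> cval -> ccmd
| CCall : cval -> cval -> ccont -> ccmd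
with ccont : Type :=
| CKont : ccmd -> ccont
with cval : Type :=
| CVar : nat -> cval
| CLam : cterm -> cval
with cterm : Type :=
| CTm : ccmd -> cterm.

Fixpoint clift_m (c : nat) (M : ccmd) : ccmd :=
  match M with
  | CKV V => CKV (clift_v c V)
  | CApp K V => CApp (clift_k c K) (clift_v c V)
  | CCall V W K => CCall (clift_v c V) (clift_v c W) (clift_k c K)
  end
with clift_k (c : nat) (K : ccont) : ccont :=
  match K with
  | CKont M => CKont (clift_m (S c) M)
  end
with clift_v (c : nat) (V : cval) : cval :=
  match V with
  | CVar n => CVar (if Nat.leb c n then S n else n)
  | CLam P => CLam (clift_p (S c) P)
  end
with clift_p (c : nat) (P : cterm) : cterm :=
  match P with
  | CTm M => CTm (clift_m c M)
  end.

Fixpoint csubst_m (j : nat) (s : cval) (M : ccmd) : ccmd :=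
  match M with
  | CKV V => CKV (csubst_v j s V)
  | CApp K V => CApp (csubst_k j s K) (csubst_v j s V)
  | CCall V W K => CCall (csubst_v j s V) (csubst_v j s W) (csubst_k j s K)
  end
with csubst_k (j : nat) (s : cval) (K : ccont) : ccont :=
  match K with
  | CKont M => CKont (csubst_m (S j) (clift_v 0 s) M)
  end
with csubst_v (j : nat) (s : cval) (V : cval) : cval :=
  match V with
  | CVar n => if Nat.eqb n j then s
              else if Nat.ltb j n then CVar (pred n) else CVar n
  | CLam P => CLam (csubst_p (S j) (clift_v 0 s) P)
  end
with csubst_p (j : nat) (s : cval) (P : cterm) : cterm :=
  match P with
  | CTm M => CTm (csubst_m j s M)
  end.

(* [K/k] : substitution of a continuation for the free occurrences of k.
   Values contain no free k (every k in a value is under its lambda k). *)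
Fixpoint cksubst_m (K : ccont) (M : ccmd) : ccmd :=
  match M with
  | CKV V => CApp K V
  | CApp K' V => CApp (cksubst_k K K') V
  | CCall V W K' => CCall V W (cksubst_k K K')
  end
with cksubst_k (K : ccont) (K' : ccont) : ccont :=
  match K' with
  | CKont M => CKont (cksubst_m (clift_k 0 K) M)
  end.

Inductive cstep_m : ccmd -> ccmd -> Prop :=
| cstep_sigma : forall M V,
    cstep_m (CApp (CKont M) V) (csubst_m 0 V M)
| cstep_Bv : forall M W K,
    cstep_m (CCall (CLam (CTm M)) W K)
            (CApp (CKont (cksubst_m (clift_k 0 K) M)) W)
| cstep_kv : forall V V', cstep_v V V' -> cstep_m (CKV V) (CKV V')
| cstep_app1 : forall K K' V, cstep_k K K' -> cstep_m (CApp K V) (CApp K' V)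
| cstep_app2 : forall K V V', cstep_v V V' -> cstep_m (CApp K V) (CApp K V')
| cstep_call1 : forall V V' W K, cstep_v V V' -> cstep_m (CCall V W K) (CCall V' W K)
| cstep_call2 : forall V W W' K, cstep_v W W' -> cstep_m (CCall V W K) (CCall V W' K)
| cstep_call3 : forall V W K K', cstep_k K K' -> cstep_m (CCall V W K) (CCall V W K')
with cstep_k : ccont -> ccont -> Prop :=
| cstep_kont : forall M M', cstep_m M M' -> cstep_k (CKont M) (CKont M')
with cstep_v : cval -> cval -> Prop :=
| cstep_lam : forall P P', cstep_p P P' -> cstep_v (CLam P) (CLam P')
with cstep_p : cterm -> cterm -> Prop :=
| cstep_tm : forall M M', cstep_m M M' -> cstep_p (CTm M) (CTm M').

(* neg_wr M = M^wr ,  neg_v V = V^~ ,  neg M = M^- *)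
Fixpoint neg_wr (M : vterm) : ccmd :=
  match M with
  | VUp V => CKV (neg_v V)
  | VCv V (VAbs N) => CApp (CKont (neg_wr N)) (neg_v V)
  | VCv V (VPair W N) => CCall (neg_v V) (neg_v W) (CKont (neg_wr N))
  end
with neg_v (V : vval) : cval :=
  match V with
  | VVar n => CVar n
  | VLam M => CLam (CTm (neg_wr M))
  end.

Definition neg (M : vterm) : cterm := CTm (neg_wr M).

(* inv_x M = M^x ,  inv_xx V = V^xx ,  inv_plus P = P^+ *)
Fixpoint inv_x (M : ccmd) : vterm :=
  match M with
  | CKV V => VUp (inv_xx V)
  | CApp (CKont N) V => VCv (inv_xx V) (VAbs (inv_x N))
  | CCall V W (CKont N) => VCv (inv_xx V) (VPair (inv_xx W) (inv_x N))
  end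
with inv_xx (V : cval) : vval :=
  match V with
  | CVar n => VVar n
  | CLam (CTm M) => VLam (inv_x M)
  end.

Definition inv_plus (P : cterm) : vterm :=
  match P with CTm M => inv_x M end.

(* The negative translation is a syntactic bijection: up V, C_v(V, x.M) and
   C_v(V, (W, x.M)) correspond to k V, (lambda x.M) V and V W (lambda x.M).
   It commutes with lifting and value substitution, and it turns the append
   M : (x.N) into the continuation substitution [lambda x.N^wr / k].  Hence
   a (sigma_v) redex is mapped to a (sigma_v) redex and a (B_v) redex to a
   (B_v) redex with matching contracta.  The inverse translation, being the
   inverse bijection, inherits these commutations and so simulates CPS
   reduction in VFS. *)

Lemma inv_x_neg_wr (M : vterm) : inv_x (neg_wr M) = M
with inv_xx_neg_v (V : vval) : inv_xx (neg_v V) = V.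
Proof.
  - destruct M as [V | V [N | W N]]; cbn;
      rewrite ?inv_xx_neg_v, ?inv_x_neg_wr; reflexivity.
  - destruct V as [n | M]; cbn; rewrite ?inv_x_neg_wr; reflexivity.
Qed.

Lemma neg_wr_inv_x (M : ccmd) : neg_wr (inv_x M) = M
with neg_v_inv_xx (V : cval) : neg_v (inv_xx V) = V.
Proof.
  - destruct M as [V | [N] V | V W [N]]; cbn;
      rewrite ?neg_v_inv_xx, ?neg_wr_inv_x; reflexivity.
  - destruct V as [n | [M]]; cbn; rewrite ?neg_wr_inv_x; reflexivity.
Qed.

Lemma neg_inv_plus (P : cterm) : neg (inv_plus P) = P.
Proof. destruct P as [M]; unfold neg; cbn; rewrite neg_wr_inv_x; reflexivity. Qed.

Lemma neg_wr_vlift (c : nat) (M : vterm) :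
  neg_wr (vlift_t c M) = clift_m c (neg_wr M)
with neg_v_vlift (c : nat) (V : vval) :
  neg_v (vlift_v c V) = clift_v c (neg_v V).
Proof.
  - destruct M as [V | V [N | W N]]; cbn;
      rewrite ?neg_v_vlift, ?neg_wr_vlift; reflexivity.
  - destruct V as [n | M]; cbn; rewrite ?neg_wr_vlift; reflexivity.
Qed.

Lemma neg_wr_vsubst (j : nat) (s : vval) (M : vterm) :
  neg_wr (vsubst_t j s M) = csubst_m j (neg_v s) (neg_wr M)
with neg_v_vsubst (j : nat) (s : vval) (V : vval) :
  neg_v (vsubst_v j s V) = csubst_v j (neg_v s) (neg_v V).
Proof.
  - destruct M as [V | V [N | W N]]; cbn;
      rewrite ?neg_v_vsubst, ?neg_wr_vsubst, ?neg_v_vlift; reflexivity.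
  - destruct V as [n | M]; simpl.
    + destruct (Nat.eqb n j); [reflexivity |].
      destruct (Nat.ltb j n); reflexivity.
    + rewrite neg_wr_vsubst, neg_v_vlift; reflexivity.
Qed.

Fixpoint neg_wr_vappend (M N : vterm) :
  neg_wr (vappend_t M (VAbs N)) = cksubst_m (CKont (neg_wr N)) (neg_wr M).
Proof.
  destruct M as [V | V [M | W M]]; cbn;
    rewrite ?neg_wr_vappend, ?neg_wr_vlift; reflexivity.
Qed.

Lemma neg_wr_step (M1 M2 : vterm) :
  vstep_t M1 M2 -> cstep_m (neg_wr M1) (neg_wr M2)
with neg_v_step (V1 V2 : vval) :
  vstep_v V1 V2 -> cstep_v (neg_v V1) (neg_v V2).
Proof.
  - destruct 1 as [M V N | V N | V V' HV | V V' [N | W N] HV | V c c' Hc]; cbn.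
    + rewrite neg_wr_vappend, neg_wr_vlift.
      exact (cstep_Bv (neg_wr M) (neg_v V) (CKont (neg_wr N))).
    + rewrite neg_wr_vsubst; apply cstep_sigma.
    + apply cstep_kv, neg_v_step, HV.
    + apply cstep_app2, neg_v_step, HV.
    + apply cstep_call1, neg_v_step, HV.
    + destruct Hc as [N N' HN | W W' N HW | W N N' HN]; cbn.
      * apply cstep_app1, cstep_kont, neg_wr_step, HN.
      * apply cstep_call2, neg_v_step, HW.
      * apply cstep_call3, cstep_kont, neg_wr_step, HN.
  - destruct 1 as [M M' HM]; cbn.
    apply cstep_lam, cstep_tm, neg_wr_step, HM.
Qed.

Lemma inv_x_csubst (j : nat) (s : cval) (M : ccmd) :
  inv_x (csubst_m j s M) = vsubst_t j (inv_xx s) (inv_x M).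
Proof.
  rewrite <- (neg_wr_inv_x M) at 1; rewrite <- (neg_v_inv_xx s) at 1.
  rewrite <- neg_wr_vsubst; apply inv_x_neg_wr.
Qed.

Lemma inv_x_clift (c : nat) (M : ccmd) :
  inv_x (clift_m c M) = vlift_t c (inv_x M).
Proof.
  rewrite <- (neg_wr_inv_x M) at 1.
  rewrite <- neg_wr_vlift; apply inv_x_neg_wr.
Qed.

Lemma inv_x_cksubst (M N : ccmd) :
  inv_x (cksubst_m (CKont N) M) = vappend_t (inv_x M) (VAbs (inv_x N)).
Proof.
  rewrite <- (neg_wr_inv_x M) at 1; rewrite <- (neg_wr_inv_x N) at 1.
  rewrite <- neg_wr_vappend; apply inv_x_neg_wr.
Qed.

Lemma inv_x_step (M1 M2 : ccmd) :
  cstep_m M1 M2 -> vstep_t (inv_x M1) (inv_x M2)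
with inv_xx_step (V1 V2 : cval) :
  cstep_v V1 V2 -> vstep_v (inv_xx V1) (inv_xx V2).
Proof.
  - destruct 1 as [M V | M W [N] | V V' HV | K K' V HK | [N] V V' HV
                  | V V' W [N] HV | V W W' [N] HW | V W K K' HK]; cbn.
    + rewrite inv_x_csubst; apply vstep_sigma.
    + rewrite inv_x_cksubst, inv_x_clift; apply vstep_Bv.
    + apply vstep_up, inv_xx_step, HV.
    + destruct HK as [N N' HN]; cbn.
      apply vstep_cv2, vstep_abs, inv_x_step, HN.
    + apply vstep_cv1, inv_xx_step, HV.
    + apply vstep_cv1, inv_xx_step, HV.
    + apply vstep_cv2, vstep_pair1, inv_xx_step, HW.
    + destruct HK as [N N' HN]; cbn.
      apply vstep_cv2, vstep_pair2, inv_x_step, HN.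
  - destruct 1 as [P P' [M M' HM]]; cbn.
    apply vstep_lam, inv_x_step, HM.
Qed.

Theorem theorem3 :
  (* (1) *)
  ((forall M : vterm, inv_plus (neg M) = M) /\
   (forall M : vterm, inv_x (neg_wr M) = M) /\
   (forall V : vval, inv_xx (neg_v V) = V)) /\
  (* (2) *)
  ((forall P : cterm, neg (inv_plus P) = P) /\
   (forall M : ccmd, neg_wr (inv_x M) = M) /\
   (forall V : cval, neg_v (inv_xx V) = V)) /\
  (* (3) *)
  ((forall M1 M2 : vterm, vstep_t M1 M2 -> cstep_m (neg_wr M1) (neg_wr M2)) /\
   (forall M1 M2 : vterm, vstep_t M1 M2 -> cstep_p (neg M1) (neg M2))) /\
  (* (4) *)
  ((forall M1 M2 : ccmd, cstep_m M1 M2 -> vstep_t (inv_x M1) (inv_x M2)) /\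
   (forall P1 P2 : cterm, cstep_p P1 P2 -> vstep_t (inv_plus P1) (inv_plus P2))).
Proof.
  split; [| split; [| split]].
  - exact (conj inv_x_neg_wr (conj inv_x_neg_wr inv_xx_neg_v)).
  - exact (conj neg_inv_plus (conj neg_wr_inv_x neg_v_inv_xx)).
  - split; [exact neg_wr_step |].
    intros M1 M2 H; apply cstep_tm, neg_wr_step, H.
  - split; [exact inv_x_step |].
    intros P1 P2 [M1 M2 HM]; apply inv_x_step, HM.
Qed.
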